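(* Let $I$ be an open interval with $a=\inf I$, $S$ a nonempty set, and $V$ a subgroup of $\mathrm{Homeo}^+(I)$ that acts freely on $I$. Suppose $F:I\to S$ satisfies $F=F\circ\psi$ for some non-identity $\psi\in V$. Then for every $\varphi\in V$: if there is $t\in I$ with $F(x)=F(\varphi(x))$ for all $x\in(a,t)$, then $F=F\circ\varphi$ on all of $I$.
   Context: $\mathrm{Homeo}^+(I)$ is the group of increasing homeomorphisms of $I$; $V$ acts freely on $I$ if no non-identity element of $V$ has a fixed point in $I$. *)

From HB Require Import structures.
From mathcomp Require Import all_boot all_order all_algebra.
From mathcomp Require Import all_classical all_reals all_analysis.
Set Implicit Arguments. Unset Strict Implicit. Unset Printing Implicit Defensive.
Import Order.TTheory GRing.Theory Num.Theory.
Import numFieldNormedType.Exports.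
Local Open Scope classical_set_scope.
Local Open Scope ring_scope.

Definition open_interval {R : realType} (I : set R) : Prop :=
  exists a b : \bar R, (a < b)%E /\ I = [set x | (a < x%:E)%E /\ (x%:E < b)%E].

Definition homeo_plus {R : realType} (I : set R) (f : R -> R) : Prop :=
  [/\ (forall x, I x -> I (f x)),
      (forall x y, I x -> I y -> x < y -> f x < f y),
      (forall y, I y -> exists2 x, I x & f x = y)
    & {within I, continuous (f : R -> R)}].

(* V is a subgroup of Homeo^+(I); elements are functions R -> R,
   and equality of homeomorphisms is equality on I. *)
Definition homeo_subgroup {R : realType} (I : set R) (V : set (R -> R)) : Prop :=
  [/\ (forall f, V f -> homeo_plus I f),
      (exists2 e, V e & forall x, I x -> e x = x),
      (forall f g, V f -> V g -> exists2 h, V h & forall x, I x -> h x = f (g x))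
    & (forall f, V f -> exists2 g, V g & forall x, I x -> g (f x) = x)].

Definition acts_freely {R : realType} (I : set R) (V : set (R -> R)) : Prop :=
  forall f, V f -> (exists x, I x /\ f x <> x) -> forall x, I x -> f x <> x.

From mathcomp Require Import all_boot all_order all_algebra.
From mathcomp Require Import all_classical all_reals all_analysis.
From mathcomp Require Import lra.
Set Implicit Arguments. Unset Strict Implicit. Unset Printing Implicit Defensive.
Import Order.TTheory GRing.Theory Num.Theory.
Import numFieldNormedType.Exports.
Local Open Scope classical_set_scope.
Local Open Scope ring_scope.

(** A group acting freely on an interval by increasing homeomorphisms is
    totally ordered by comparing graphs: by the intermediate value theorem an
    element without fixed points lies entirely above or entirely below the
    diagonal. The order is Archimedean, since the orbit of a point under a
    positive element leaves every bounded part of the interval. Hölder's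
    argument then makes the group abelian: if [b a < a b], then
    [e = a b (b a)^-1] is positive, and either [e] is the least positive
    element, so that [a] and [b] are powers of [e] and commute, or some
    positive [d] has [d d <= e], which the Archimedean property forbids.
    Let [p] be whichever of [psi], [psi^-1] is positive: it preserves [F] and
    commutes with [phi]. Every [x] of [I] is [p^n z] for some [z < t], so
    [F x = F z = F (phi z) = F (p^n (phi z)) = F (phi x)]. *)

Lemma comp_commute_inv (T : Type) (f fi g : T -> T) :
  cancel f fi -> cancel fi f -> fi \o g = g \o fi -> f \o g = g \o f.
Proof.
move=> ffi fif comm; apply: funext => x /=.
by rewrite -{1}(ffi x) -[g (fi _)]/((g \o fi) _) -comm /= fif.
Qed.

Lemma iter_invariant (T S : Type) (A : set T) (F : T -> S) (p : T -> T) n x :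
  (forall y, A y -> A (p y)) -> (forall y, A y -> F (p y) = F y) ->
  A x -> F (iter n p x) = F x.
Proof.
move=> pA Fp Ax; have Aiter k : A (iter k p x) by elim: k => //= k; exact: pA.
by elim: n => //= n IH; rewrite Fp ?Aiter.
Qed.

Section RealInterval.
Variables (R : realType) (I : set R).

Lemma open_interval_is_interval : open_interval I -> is_interval I.
Proof.
case=> a [b [_ ->]] x y /= [ax _] [_ yb] z /andP[xz zy]; split.
- by apply: lt_le_trans ax _; rewrite lee_fin.
- by apply: le_lt_trans yb; rewrite lee_fin.
Qed.

Lemma open_interval_inf_lt z :
  open_interval I -> I z -> (ereal_inf [set y%:E | y in I] < z%:E)%E.
Proof.
case=> a [b [_ EI]] Iz; have [az zb] : (a < z%:E)%E /\ (z%:E < b)%E.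
  by rewrite EI in Iz.
suff [y Iy yz] : exists2 y, I y & y < z.
  apply: le_lt_trans (ereal_inf_lbound _) _; first by exists y.
  by rewrite lte_fin.
rewrite {}EI; case: a az => [r| |] //= az.
- rewrite lte_fin in az; exists ((r + z) / 2); last by lra.
  split; first by rewrite lte_fin; lra.
  by apply: le_lt_trans zb; rewrite lee_fin; lra.
- exists (z - 1); last by lra.
  by split; [exact: ltNyr | apply: le_lt_trans zb; rewrite lee_fin; lra].
Qed.

Lemma homeo_plus_ltE f x y :
  homeo_plus I f -> I x -> I y -> (f x < f y) = (x < y).
Proof.
case=> _ fmono _ _ Ix Iy; case: (ltgtP x y) => [xy|yx|->]; first exact: fmono.
- by apply/negbTE; rewrite -leNgt ltW // fmono.
- exact: ltxx.
Qed.

Lemma homeo_plus_leE f x y :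
  homeo_plus I f -> I x -> I y -> (f x <= f y) = (x <= y).
Proof. by move=> hf Ix Iy; rewrite !leNgt homeo_plus_ltE. Qed.

Lemma continuous_fixpoint_free_sign f :
  is_interval I -> {within I, continuous f} -> (forall x, I x -> f x != x) ->
  (forall x, I x -> x < f x) \/ (forall x, I x -> f x < x).
Proof.
move=> intI fcont nofix.
have gcont : {within I, continuous (fun x => f x - x)}.
  move=> x; apply: (continuousB (f := f : subspace I -> R) (g := id)).
  - exact: fcont.
  - exact: incl_subspace_continuous.
have no_root x y : I x -> I y -> x <= y ->
    ~ (Num.min (f x - x) (f y - y) <= 0 <= Num.max (f x - x) (f y - y)).
  move=> Ix Iy xy between.
  have xyI : `[x, y] `<=` I.
    by move=> c /=; rewrite in_itv /=; exact: intI.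
  have [c /xyI Ic /eqP] := IVT xy (continuous_subspaceW xyI gcont) between.
  by rewrite subr_eq0; apply/negP/nofix.
apply: contrapT => /not_orP[/existsNP[x] /not_implyP[Ix]].
move=> /negP; rewrite -leNgt -subr_le0 => gx_le0.
move=> /existsNP[y] /not_implyP[Iy] /negP; rewrite -leNgt -subr_ge0 => gy_ge0.
have between : Num.min (f x - x) (f y - y) <= 0 <= Num.max (f x - x) (f y - y).
  by rewrite ge_min gx_le0 le_max gy_ge0 orbT.
case: (leP x y) => [xy|/ltW yx]; first exact: no_root xy between.
by apply: no_root Iy Ix yx _; rewrite minC maxC.
Qed.
End RealInterval.

Section FreeGroupAction.
Variables (R : realType) (I : set R) (V : set (R -> R)).
Hypotheses (intI : is_interval I) (HV : homeo_subgroup I V).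
Hypothesis HF : acts_freely I V.

(* Elements of [V] made the identity outside [I]: on them equality in
   Homeo^+(I) is Leibniz equality, and composition is the group law. *)
Definition Vbar (f : R -> R) : Prop :=
  (forall x, ~ I x -> f x = x) /\ exists2 h, V h & forall x, I x -> f x = h x.

Definition ext_id (h : R -> R) : R -> R :=
  fun x => if `[< I x >] then h x else x.

Definition lt_on (f g : R -> R) : Prop := forall x, I x -> f x < g x.
Definition le_on (f g : R -> R) : Prop := forall x, I x -> f x <= g x.

Lemma ext_idE h x : I x -> ext_id h x = h x.
Proof. by move=> Ix; rewrite /ext_id asboolT. Qed.

Lemma Vbar_ext_id h : V h -> Vbar (ext_id h).
Proof.
move=> Vh; split; first by move=> x nIx; rewrite /ext_id asboolF.
by exists h => // x /ext_idE.
Qed.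

Lemma Vbar_homeo_plus f : Vbar f -> homeo_plus I f.
Proof.
case: HV => homeoV _ _ _ [_ [h /homeoV[hI hmono honto hcont] fh]]; split.
- by move=> x Ix; rewrite fh //; exact: hI.
- by move=> x y Ix Iy; rewrite !fh //; exact: hmono.
- by move=> y /honto[x Ix hx]; exists x; rewrite ?fh.
- apply: subspace_eq_continuous hcont => x /set_mem Ix.
  by rewrite /from_subspace fh.
Qed.

Lemma Vbar_mapsto f x : Vbar f -> I x -> I (f x).
Proof. by case/Vbar_homeo_plus => fI _ _ _; exact: fI. Qed.

Lemma Vbar_ltE f x y : Vbar f -> I x -> I y -> (f x < f y) = (x < y).
Proof. by move/Vbar_homeo_plus; exact: homeo_plus_ltE. Qed.

Lemma Vbar_leE f x y : Vbar f -> I x -> I y -> (f x <= f y) = (x <= y).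
Proof. by move/Vbar_homeo_plus; exact: homeo_plus_leE. Qed.

Lemma Vbar_id : Vbar id.
Proof. by case: HV => _ [e Ve eid] _ _; split => //; exists e => // x /eid. Qed.

Lemma Vbar_comp f g : Vbar f -> Vbar g -> Vbar (f \o g).
Proof.
move=> Vf Vg; have [f_out [hf Vhf fh]] := Vf; have [g_out [hg Vhg gh]] := Vg.
split; first by move=> x nIx /=; rewrite g_out // f_out.
case: HV => _ _ /(_ hf hg Vhf Vhg)[k Vk kh] _.
by exists k => // x Ix /=; rewrite kh // -gh // fh //; exact: Vbar_mapsto.
Qed.

Lemma Vbar_iter f n : Vbar f -> Vbar (iter n f).
Proof.
by move=> Vf; elim: n => [|n IH]; [exact: Vbar_id | exact: Vbar_comp].
Qed.

Lemma Vbar_inv f : Vbar f -> exists2 g, Vbar g & cancel f g /\ cancel g f.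
Proof.
move=> Vf; have [f_out [h Vh fh]] := Vf.
case: HV => _ _ _ /(_ h Vh)[g Vg gh].
have gf : cancel f (ext_id g).
  move=> x; case: (pselect (I x)) => Ix.
    by rewrite ext_idE ?fh ?gh //; rewrite -fh //; exact: Vbar_mapsto.
  by rewrite f_out // /ext_id asboolF.
exists (ext_id g); [exact: Vbar_ext_id | split => // y].
case: (pselect (I y)) => Iy; last by rewrite /ext_id asboolF // f_out.
have [_ _ fonto _] := Vbar_homeo_plus Vf.
by have [x Ix <-] := fonto y Iy; rewrite gf.
Qed.

Lemma Vbar_sign f : Vbar f -> f = id \/ lt_on id f \/ lt_on f id.
Proof.
move=> Vf; have [f_out [h Vh fh]] := Vf.
case: (pselect (exists x, I x /\ f x <> x)) => [[x [Ix fx]]|fixed]; last first.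
  left; apply: funext => y; case: (pselect (I y)) => Iy; last exact: f_out.
  by apply: contrapT => fy; apply: fixed; exists y.
have nofix y : I y -> f y != y.
  move=> Iy; rewrite fh //; apply/eqP/(HF Vh) => //.
  by exists x; rewrite -fh.
have [_ _ _ fcont] := Vbar_homeo_plus Vf.
by right; case: (continuous_fixpoint_free_sign intI fcont nofix); [left|right].
Qed.

Lemma Vbar_total f g : Vbar f -> Vbar g -> f = g \/ lt_on f g \/ lt_on g f.
Proof.
move=> Vf Vg; have [gi Vgi [_ gig]] := Vbar_inv Vg.
have Igif x : I x -> I (gi (f x)) by move=> Ix; do 2 apply: Vbar_mapsto => //.
case: (Vbar_sign (Vbar_comp Vgi Vf)) => [E|[gf_pos|gf_neg]].
- left; apply: funext => x.
  by rewrite -[f x]gig; have /= -> := congr1 (@^~ x) E.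
- right; right => x Ix; rewrite -[f x]gig (Vbar_ltE Vg Ix (Igif x Ix)).
  exact: gf_pos.
- right; left => x Ix; rewrite -[f x]gig (Vbar_ltE Vg (Igif x Ix) Ix).
  exact: gf_neg.
Qed.

Lemma Vbar_le_or_lt f g : Vbar f -> Vbar g -> le_on f g \/ lt_on g f.
Proof.
move=> Vf Vg; case: (Vbar_total Vf Vg) => [->|[fg|gf]]; last by right.
- by left => x _.
- by left => x Ix; rewrite ltW ?fg.
Qed.

Lemma orbit_unbounded a x y :
  Vbar a -> lt_on id a -> I x -> I y -> exists n, y < iter n a x.
Proof.
move=> Va a_pos Ix Iy; apply: contrapT => /forallNP bounded.
pose A := range (fun n => iter n a x).
have Ax : A x by exists 0%N.
have A_le_y : ubound A y.
  by move=> _ [n _ <-]; rewrite leNgt; exact/negP/bounded.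
have hsA : has_sup A by split; [exists x | exists y].
have IsupA : I (sup A).
  apply: (intI Ix Iy); rewrite sup_upper_bound //=.
  by apply: ge_sup; [exists x | exact: A_le_y].
have [_ _ aonto _] := Vbar_homeo_plus Va.
(* The preimage w of sup A is below sup A, hence below some orbit point,
   whose image then exceeds sup A. *)
have [w Iw aw] := aonto _ IsupA.
have w_lt : w < sup A by rewrite -[X in _ < X]aw; exact: a_pos.
have gap_gt0 : 0 < sup A - w by rewrite subr_gt0.
have [_ [n _ <-]] := sup_adherent gap_gt0 hsA.
rewrite opprB addrCA subrr addr0 => w_lt_orbit.
have : iter n.+1 a x <= sup A by apply: sup_upper_bound => //; exists n.+1.
rewrite leNgt /= -aw (Vbar_ltE Va) // ?w_lt_orbit //.
exact: Vbar_mapsto (Vbar_iter n Va) Ix.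
Qed.

Lemma orbit_reaches_below p x t : Vbar p -> lt_on id p -> I x -> I t ->
  exists n, exists2 z, I z /\ z < t & iter n p z = x.
Proof.
move=> Vp p_pos Ix It; have [n x_lt] := orbit_unbounded Vp p_pos It Ix.
have Vpn := Vbar_iter n Vp; have [k Vk [_ kp]] := Vbar_inv Vpn.
exists n, (k x) => //; have Ikx := Vbar_mapsto Vk Ix.
by split => //; rewrite -(Vbar_ltE Vpn Ikx It) kp.
Qed.

Variable x0 : R.
Hypothesis Ix0 : I x0.

Lemma lt_on_le_on_absurd f g : lt_on f g -> le_on g f -> False.
Proof. by move=> /(_ x0 Ix0) fg /(_ x0 Ix0); rewrite leNgt fg. Qed.

Lemma Vbar_archimedean a b :
  Vbar a -> lt_on id a -> Vbar b -> exists n, lt_on b (iter n a).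
Proof.
move=> Va a_pos Vb; have Ibx0 := Vbar_mapsto Vb Ix0.
have [n bx0_lt] := orbit_unbounded Va a_pos Ix0 Ibx0.
exists n; case: (Vbar_le_or_lt (Vbar_iter n Va) Vb) => // an_le_b.
by have := an_le_b x0 Ix0; rewrite leNgt bx0_lt.
Qed.

Lemma Vbar_floor d a : Vbar d -> lt_on id d -> Vbar a -> lt_on id a ->
  exists m, le_on (iter m d) a /\ lt_on a (iter m.+1 d).
Proof.
move=> Vd d_pos Va a_pos.
have exP : exists n, `[< lt_on a (iter n d) >].
  by have [n ?] := Vbar_archimedean Vd d_pos Va; exists n; exact/asboolP.
case: (ex_minnP exP) => -[/asboolP a_lt_id|m /asboolP a_lt min_m].
  by case: (lt_on_le_on_absurd a_lt_id) => x Ix; rewrite ltW ?a_pos.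
exists m; split => //; case: (Vbar_le_or_lt (Vbar_iter m Vd) Va) => // a_lt'.
by have := min_m m (asboolT a_lt'); rewrite ltnn.
Qed.

Lemma Vbar_least_positive_powers e g :
  Vbar e -> lt_on id e -> (forall h, Vbar h -> lt_on id h -> le_on e h) ->
  Vbar g -> lt_on id g -> exists m, g = iter m e.
Proof.
move=> Ve e_pos e_least Vg g_pos.
have [m [em_le_g g_lt]] := Vbar_floor Ve e_pos Vg g_pos.
exists m; case: (Vbar_total (Vbar_iter m Ve) Vg) => [//|[em_lt_g|g_lt_em]].
  2: by case: (lt_on_le_on_absurd g_lt_em em_le_g).
have Vem := Vbar_iter m Ve; have [k Vk [_ kem]] := Vbar_inv Vem.
have Ikg x : I x -> I (k (g x)) by move=> Ix; do 2 apply: Vbar_mapsto => //.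
have kg_pos : lt_on id (k \o g).
  by move=> x Ix; rewrite /= -(Vbar_ltE Vem Ix (Ikg x Ix)) kem; exact: em_lt_g.
case: (lt_on_le_on_absurd g_lt) => x Ix.
have := e_least _ (Vbar_comp Vk Vg) kg_pos x Ix.
by rewrite /= -(Vbar_leE Vem (Vbar_mapsto Ve Ix) (Ikg x Ix)) kem -iterSr.
Qed.

Lemma small_square_gap a b d :
  Vbar a -> lt_on id a -> Vbar b -> lt_on id b -> Vbar d -> lt_on id d ->
  ~ le_on (d \o d \o b \o a) (a \o b).
Proof.
move=> Va a_pos Vb b_pos Vd d_pos dd_le.
have [m [dm_le_a a_lt]] := Vbar_floor Vd d_pos Va a_pos.
have [n [dn_le_b b_lt]] := Vbar_floor Vd d_pos Vb b_pos.
have Id k x : I x -> I (iter k d x) by exact/Vbar_mapsto/Vbar_iter.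
have Ia := Vbar_mapsto Va Ix0; have Ib := Vbar_mapsto Vb Ix0.
(* With d^m <= a < d^(m+1) and d^n <= b < d^(n+1),
   a b < d^(m+n+2) <= d d b a. *)
have upper : a (b x0) < iter (m.+1 + n.+1) d x0.
  rewrite iterD; apply: lt_le_trans (a_lt _ Ib) _.
  rewrite (Vbar_leE (Vbar_iter m.+1 Vd) Ib (Id _ _ Ix0)).
  exact/ltW/b_lt.
have core : iter (m + n) d x0 <= b (a x0).
  rewrite addnC iterD; apply: le_trans (dn_le_b _ Ia).
  by rewrite (Vbar_leE (Vbar_iter n Vd) (Id _ _ Ix0) Ia) dm_le_a.
have Iba := Vbar_mapsto Vb Ia; have Idn := Id (m + n)%N _ Ix0.
have lower : iter (m.+1 + n.+1) d x0 <= a (b x0).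
  apply: le_trans (dd_le _ Ix0); rewrite addSn addnS !iterS /=.
  by rewrite (Vbar_leE Vd (Id 1%N _ Idn) (Id 1%N _ Iba)) (Vbar_leE Vd Idn Iba).
by have := lt_le_trans upper lower; rewrite ltxx.
Qed.

Lemma Vbar_least_or_small_square e : Vbar e -> lt_on id e ->
  (forall g, Vbar g -> lt_on id g -> le_on e g) \/
  exists2 d, Vbar d /\ lt_on id d & le_on (d \o d) e.
Proof.
move=> Ve e_pos.
case: (pselect (forall g, Vbar g -> lt_on id g -> le_on e g)); first by left.
move=> /existsNP[g /not_implyP[Vg /not_implyP[g_pos e_not_le]]]; right.
have g_lt_e : lt_on g e by case: (Vbar_le_or_lt Ve Vg).
case: (Vbar_le_or_lt (Vbar_comp Vg Vg) Ve) => [gg_le|e_lt_gg].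
  by exists g.
(* Here g < e < g g, so d = e g^-1 is positive and d d < d g = e. *)
have [gi Vgi [_ gig]] := Vbar_inv Vg.
have Igi x : I x -> I (gi x) by exact: Vbar_mapsto.
have Vd := Vbar_comp Ve Vgi.
exists (e \o gi); first split => // x Ix.
  by rewrite -{1}[x]gig; exact: g_lt_e (Igi x Ix).
have egi_lt x : I x -> gi (e (gi x)) < x.
  move=> Ix; have Iegi := Vbar_mapsto Ve (Igi x Ix).
  rewrite -(Vbar_ltE Vg (Igi _ Iegi) Ix) gig -{2}[x]gig.
  exact: e_lt_gg (Igi x Ix).
move=> /= x Ix; have Iegi := Vbar_mapsto Ve (Igi x Ix).
by apply: ltW; rewrite (Vbar_ltE Ve (Igi _ Iegi) Ix) egi_lt.
Qed.

Lemma Vbar_positive_not_lt_comm a b :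
  Vbar a -> lt_on id a -> Vbar b -> lt_on id b -> ~ lt_on (b \o a) (a \o b).
Proof.
move=> Va a_pos Vb b_pos ba_lt_ab.
have [c Vc [bac cba]] := Vbar_inv (Vbar_comp Vb Va).
have Ve := Vbar_comp (Vbar_comp Va Vb) Vc.
have Ic x : I x -> I (c x) by exact: Vbar_mapsto.
have e_pos : lt_on id (a \o b \o c).
  by move=> x Ix; rewrite -{1}[x]cba; exact: ba_lt_ab (Ic x Ix).
set e := a \o b \o c in Ve e_pos.
case: (Vbar_least_or_small_square Ve e_pos) => [e_least|[d [Vd d_pos] dd_le]].
- have [i Ea] := Vbar_least_positive_powers Ve e_pos e_least Va a_pos.
  have [j Eb] := Vbar_least_positive_powers Ve e_pos e_least Vb b_pos.
  by have := ba_lt_ab x0 Ix0; rewrite /= Ea Eb -!iterD addnC ltxx.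
- apply: (small_square_gap Va a_pos Vb b_pos Vd d_pos) => x Ix.
  have := dd_le _ (Vbar_mapsto (Vbar_comp Vb Va) Ix).
  by rewrite /e /= (bac x : c (b (a x)) = x).
Qed.

Lemma Vbar_sign_inv f : Vbar f -> f = id \/ lt_on id f \/
  exists2 g, Vbar g /\ lt_on id g & cancel f g /\ cancel g f.
Proof.
move=> Vf; case: (Vbar_sign Vf) => [->|[f_pos|f_neg]]; first by left.
  by right; left.
right; right; have [g Vg [fg gf]] := Vbar_inv Vf.
exists g => //; split => // x Ix; have Igx := Vbar_mapsto Vg Ix.
by rewrite -(Vbar_ltE Vf Ix Igx) gf; exact: f_neg.
Qed.

Lemma Vbar_commute a b : Vbar a -> Vbar b -> a \o b = b \o a.
Proof.
have pos_comm f g :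
    Vbar f -> lt_on id f -> Vbar g -> lt_on id g -> f \o g = g \o f.
  move=> Vf f_pos Vg g_pos.
  case: (Vbar_total (Vbar_comp Vf Vg) (Vbar_comp Vg Vf)) => [//|[fg_lt|gf_lt]].
  - by case: (Vbar_positive_not_lt_comm Vg g_pos Vf f_pos fg_lt).
  - by case: (Vbar_positive_not_lt_comm Vf f_pos Vg g_pos gf_lt).
have pos_any f g : Vbar f -> lt_on id f -> Vbar g -> f \o g = g \o f.
  move=> Vf f_pos Vg; case: (Vbar_sign_inv Vg) => [->//|[g_pos|]].
    exact: pos_comm.
  move=> [gi [Vgi gi_pos] [ggi gig]]; apply/esym/(comp_commute_inv ggi gig).
  exact/esym/pos_comm.
move=> Va Vb; case: (Vbar_sign_inv Va) => [->//|[a_pos|]]; first exact: pos_any.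
move=> [ai [Vai ai_pos] [aai aia]]; apply: (comp_commute_inv aai aia).
exact: pos_any.
Qed.

Lemma Vbar_positive_invariant (S : Type) (F : R -> S) f :
  Vbar f -> f <> id -> (forall x, I x -> F (f x) = F x) ->
  exists p, [/\ Vbar p, lt_on id p & forall x, I x -> F (p x) = F x].
Proof.
move=> Vf f_nid Ff.
case: (Vbar_sign_inv Vf) => [//|[f_pos|]]; first by exists f.
move=> [g [Vg g_pos] [fg gf]]; exists g; split => // x Ix.
by rewrite -{2}(gf x) Ff //; exact: Vbar_mapsto Vg Ix.
Qed.

End FreeGroupAction.

Theorem lemma3p2 (R : realType) (I : set R) (S : Type) (V : set (R -> R))
  (F : R -> S) (psi : R -> R) :
  open_interval I ->
  inhabited S ->
  homeo_subgroup I V ->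
  acts_freely I V ->
  V psi -> (exists x, I x /\ psi x <> x) ->
  (forall x, I x -> F x = F (psi x)) ->
  forall phi, V phi ->
  (exists t, I t /\
     forall x, (ereal_inf [set y%:E | y in I] < x%:E)%E -> x < t -> F x = F (phi x)) ->
  forall x, I x -> F x = F (phi x).
Proof.
move=> HI _ HV HF Vpsi [y [Iy psi_y]] Fpsi phi Vphi [t [It Fphi]] x Ix.
have intI := open_interval_is_interval HI.
have psi_nid : ext_id I psi <> id.
  by move=> psi_id; apply: psi_y; rewrite -(ext_idE psi Iy) psi_id.
have Fpsi' z : I z -> F (ext_id I psi z) = F z.
  by move=> Iz; rewrite ext_idE // -Fpsi.
have [p [Vp p_pos Fp]] :=
  Vbar_positive_invariant intI HV HF (Vbar_ext_id I Vpsi) psi_nid Fpsi'.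
have [n [z [Iz z_lt] <-]] := orbit_reaches_below intI HV Vp p_pos Ix It.
have Vq := Vbar_ext_id I Vphi; have Vpn := Vbar_iter HV n Vp.
have pI w : I w -> I (p w) := Vbar_mapsto HV Vp.
have qI w : I w -> I (ext_id I phi w) := Vbar_mapsto HV Vq.
have pnq : ext_id I phi (iter n p z) = iter n p (ext_id I phi z).
  exact: (congr1 (@^~ z) (Vbar_commute intI HV HF Ix Vq Vpn)).
rewrite (iter_invariant _ pI Fp) // -(ext_idE phi (Vbar_mapsto HV Vpn Iz)).
rewrite pnq (iter_invariant _ pI Fp (qI _ Iz)) ext_idE //.
by apply: Fphi z_lt; exact: open_interval_inf_lt.
Qed.
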